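(* For each integer $n\ge2$ there exists a homeomorphism $f$ of $B_n$ onto itself such that $S^{n-1}\cup\{0\}\subset\mathrm{Fix}(f)$ and, for some point $x\in B_n\setminus(S^{n-1}\cup\{0\})$, $\omega_f(x)$ is a subset of $S^{n-1}$ homeomorphic to a circle.
   Context: $B_n=\{x\in\mathbb{R}^n:\|x\|\le1\}$ (Euclidean norm), $S^{n-1}=\{x\in\mathbb{R}^n:\|x\|=1\}$ its boundary. $\mathrm{Fix}(f)$ is the set of fixed points of $f$, and $\omega_f(x)=\{y:\ \exists\, n_i\to+\infty,\ f^{n_i}(x)\to y\}$. *)

From HB Require Import structures.
From mathcomp Require Import all_boot all_order all_algebra.
From mathcomp Require Import all_classical all_reals all_analysis.
Set Implicit Arguments. Unset Strict Implicit. Unset Printing Implicit Defensive.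
Import Order.TTheory GRing.Theory Num.Theory.
Import numFieldNormedType.Exports.
Local Open Scope classical_set_scope.
Local Open Scope ring_scope.

Definition enorm {R : realType} {n : nat} (x : 'rV[R]_n) : R :=
  Num.sqrt (\sum_(i < n) x ord0 i ^+ 2).

Definition ball_n (R : realType) (n : nat) : set 'rV[R]_n := [set x | enorm x <= 1].
Definition sphere_n (R : realType) (n : nat) : set 'rV[R]_n := [set x | enorm x = 1].

Definition homeo_via {R : realType} {m k : nat}
  (A : set 'rV[R]_m) (B : set 'rV[R]_k) (f : 'rV[R]_m -> 'rV[R]_k) (g : 'rV[R]_k -> 'rV[R]_m) : Prop :=
  (forall x, A x -> B (f x)) /\ (forall y, B y -> A (g y)) /\
  (forall x, A x -> g (f x) = x) /\ (forall y, B y -> f (g y) = y) /\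
  {within A, continuous f} /\ {within B, continuous g}.

Definition homeomorphic {R : realType} {m k : nat} (A : set 'rV[R]_m) (B : set 'rV[R]_k) : Prop :=
  exists f g, homeo_via A B f g.

Definition Fix {R : realType} {n : nat} (D : set 'rV[R]_n) (f : 'rV[R]_n -> 'rV[R]_n) : set 'rV[R]_n :=
  [set x | D x /\ f x = x].

Definition omega_limit {R : realType} {n : nat} (f : 'rV[R]_n -> 'rV[R]_n) (x : 'rV[R]_n) : set 'rV[R]_n :=
  [set y | exists n_ : nat -> nat,
     (forall N : nat, exists M : nat, forall i : nat, (M <= i)%N -> (N <= n_ i)%N) /\
     ((fun i => iter (n_ i) f x) @ \oo --> y)].

Arguments ball_n R n : clear implicits.
Arguments sphere_n R n : clear implicits.

From HB Require Import structures.
From mathcomp Require Import all_boot all_order all_algebra.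
From mathcomp Require Import all_classical all_reals all_analysis.
From mathcomp Require Import ring lra.
Import Order.TTheory GRing.Theory Num.Theory.
Import numFieldNormedType.Exports.
Local Open Scope classical_set_scope.
Local Open Scope ring_scope.

(* The homeomorphism preserves every sphere [|x| = r]: it moves it radially to
   [|x| = radial r] and rotates it in the first coordinate plane by [twist r];
   both [radial - id] and [twist] vanish at [r = 1], and [radial 0 = 0].
   Along the orbit of [x = e0 / 2] the defect [u = 1 - r] satisfies
   [u' = u / (1 + r u)], so [1/u] grows linearly and [r_k -> 1], while the
   twist [ln (1 + r u) = ln (u / u')] telescopes: the total angle is
   [ln (u_0 / u_k) -> +oo] with increments [<= u_k -> 0].  Hence the angles are
   dense modulo [2 pi] and the omega-limit set is the unit circle of the first
   coordinate plane. *)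

Section RadialProfile.
Context {R : realType}.
Implicit Types r t : R.

Definition radial_scale r : R := (2 - r) / (1 + r * (1 - r)).
Definition radial r : R := r * radial_scale r.
Definition twist r : R := ln (1 + r * (1 - r)).

(* [radial_inv t] is the root in [0, 1] of [t (1 + s (1 - s)) = s (2 - s)]. *)
Definition radial_disc t : R := Num.sqrt (5 * t ^+ 2 - 8 * t + 4).
Definition radial_inv_scale t : R := 2 / ((2 - t) + radial_disc t).
Definition radial_inv t : R := t * radial_inv_scale t.

Lemma radial_denom_ge1 r : 0 <= r <= 1 -> 1 <= 1 + r * (1 - r).
Proof. by move=> /andP[r0 r1]; nra. Qed.

Lemma radial_scale_gt0 r : 0 <= r <= 1 -> 0 < radial_scale r.
Proof.
move=> r01; have := radial_denom_ge1 _ r01; case/andP: r01 => *.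
by apply: divr_gt0; lra.
Qed.

Lemma radial_in01 r : 0 <= r <= 1 -> 0 <= radial r <= 1.
Proof.
move=> r01; have D1 := radial_denom_ge1 _ r01; case/andP: r01 => r0 r1.
rewrite /radial /radial_scale mulrA divr_ge0 ?ler_pdivrMr /=; nra.
Qed.

Lemma radial_scale1 : radial_scale 1 = 1.
Proof. by rewrite /radial_scale subrr mulr0 addr0 divr1; lra. Qed.

Lemma twist1 : twist 1 = 0.
Proof. by rewrite /twist subrr mulr0 addr0 ln1. Qed.

Lemma one_sub_radial r : 0 <= r <= 1 ->
  1 - radial r = (1 - r) / (1 + r * (1 - r)).
Proof.
move=> r01; have D1 := radial_denom_ge1 _ r01.
rewrite /radial /radial_scale; field; lra.
Qed.

Lemma twist_ge0 r : 0 <= r <= 1 -> 0 <= twist r.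
Proof. by move=> r01; rewrite /twist ln_ge0 // radial_denom_ge1. Qed.

Lemma twist_le_defect r : 0 <= r <= 1 -> twist r <= 1 - r.
Proof.
move=> r01; have D1 := radial_denom_ge1 _ r01; case/andP: r01 => r0 r1.
have := expR_ge1Dx (twist r); rewrite /twist lnK ?posrE; nra.
Qed.

Lemma radial_disc_sqr t : radial_disc t ^+ 2 = 5 * t ^+ 2 - 8 * t + 4.
Proof. by rewrite /radial_disc sqr_sqrtr //; have := sqr_ge0 (5 * t - 4); nra. Qed.

Lemma radial_inv_denom_ge1 t : 0 <= t <= 1 -> 1 <= (2 - t) + radial_disc t.
Proof.
move=> /andP[t0 t1]; have : 0 <= radial_disc t by exact: sqrtr_ge0.
by lra.
Qed.

Lemma radial_inv_scale_gt0 t : 0 <= t <= 1 -> 0 < radial_inv_scale t.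
Proof.
move=> t01; have := radial_inv_denom_ge1 _ t01.
by rewrite /radial_inv_scale => ?; apply: divr_gt0; lra.
Qed.

Lemma radial_inv_in01 t : 0 <= t <= 1 -> 0 <= radial_inv t <= 1.
Proof.
move=> t01; have A1 := radial_inv_denom_ge1 _ t01; have S2 := radial_disc_sqr t.
have S0 : 0 <= radial_disc t by exact: sqrtr_ge0.
case/andP: t01 => t0 t1.
have : 3 * t - 2 <= radial_disc t.
  rewrite leNgt; apply/negP => lt.
  have : radial_disc t ^+ 2 < (3 * t - 2) ^+ 2 by rewrite ltr_pXn2r // ?nnegrE; lra.
  by rewrite S2; nra.
rewrite /radial_inv /radial_inv_scale mulrA divr_ge0 ?ler_pdivrMr /=; lra.
Qed.

Lemma radial_inv_scaleK r : 0 <= r <= 1 ->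
  radial_inv_scale (radial r) * radial_scale r = 1.
Proof.
move=> r01; have D1 := radial_denom_ge1 _ r01; case/andP: r01 => r0 r1.
have disc : radial_disc (radial r) = (r ^+ 2 - 2 * r + 2) / (1 + r * (1 - r)).
  rewrite /radial_disc
    -[X in Num.sqrt X](_ : ((r ^+ 2 - 2 * r + 2) / (1 + r * (1 - r))) ^+ 2 = _).
    by rewrite sqrtr_sqr ger0_norm // divr_ge0 //; nra.
  by rewrite /radial /radial_scale; field; lra.
by rewrite /radial_inv_scale disc /radial /radial_scale; field; apply/andP; split; nra.
Qed.

Lemma radialK : {in `[0, 1], cancel radial radial_inv}.
Proof.
move=> r; rewrite in_itv /= => r01.
by rewrite /radial_inv /radial -mulrA (mulrC (radial_scale r)) radial_inv_scaleK // mulr1.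
Qed.

Lemma radial_invK : {in `[0, 1], cancel radial_inv radial}.
Proof.
move=> t; rewrite in_itv /= => t01.
have D1 := radial_denom_ge1 _ (radial_inv_in01 _ t01).
have A1 := radial_inv_denom_ge1 _ t01; have S2 := radial_disc_sqr t.
set A := (2 - t) + radial_disc t in A1.
(* Square [A - (2 - t) = radial_disc t]. *)
have rootA : 4 * A - 4 * t - A ^+ 2 - 2 * t * A + 4 * t ^+ 2 = 0 by rewrite /A; nra.
have inv_eq : radial_inv t * (2 - radial_inv t) = t * (1 + radial_inv t * (1 - radial_inv t)).
  apply/eqP; rewrite -subr_eq0; apply/eqP.
  transitivity (t / A ^+ 2 * (4 * A - 4 * t - A ^+ 2 - 2 * t * A + 4 * t ^+ 2)).
    by rewrite /radial_inv /radial_inv_scale -/A; field; lra.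
  by rewrite rootA mulr0.
by rewrite /radial /radial_scale mulrA inv_eq; field; lra.
Qed.

Lemma continuous_radial_scale r : 0 <= r <= 1 -> {for r, continuous radial_scale}.
Proof.
move=> r01; have D1 := radial_denom_ge1 _ r01.
apply: continuousM; first by apply: continuousB; [exact: cvg_cst | exact: cvg_id].
apply: continuousV; first by rewrite gt_eqF //; lra.
apply: continuousD; first exact: cvg_cst.
by apply: continuousM; [exact: cvg_id | apply: continuousB; [exact: cvg_cst | exact: cvg_id]].
Qed.

Lemma continuous_twist r : 0 <= r <= 1 -> {for r, continuous twist}.
Proof.
move=> r01; have D1 := radial_denom_ge1 _ r01.
rewrite (_ : twist = (@ln R) \o (fun r : R => 1 + r * (1 - r))) //.
apply: (@continuous_comp _ _ _ (fun r : R => 1 + r * (1 - r)) (@ln R)).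
  apply: continuousD; first exact: cvg_cst.
  by apply: continuousM; [exact: cvg_id | apply: continuousB; [exact: cvg_cst | exact: cvg_id]].
by apply: continuous_ln; lra.
Qed.

Lemma continuous_radial_disc : continuous radial_disc.
Proof.
move=> t; rewrite (_ : radial_disc = Num.sqrt \o (fun t : R => 5 * t ^+ 2 - 8 * t + 4)) //.
apply: (@continuous_comp _ _ _ (fun t : R => 5 * t ^+ 2 - 8 * t + 4) Num.sqrt);
  last exact: sqrt_continuous.
apply: continuousD; last exact: cvg_cst.
apply: continuousB; last by apply: continuousM; [exact: cvg_cst | exact: cvg_id].
by apply: continuousM; [exact: cvg_cst | apply: continuousM; exact: cvg_id].
Qed.

Lemma continuous_radial_inv_scale t : 0 <= t <= 1 ->
  {for t, continuous radial_inv_scale}.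
Proof.
move=> t01; have A1 := radial_inv_denom_ge1 _ t01.
apply: continuousM; first exact: cvg_cst.
apply: continuousV; first by rewrite gt_eqF //; lra.
apply: continuousD; last exact: continuous_radial_disc.
by apply: continuousB; [exact: cvg_cst | exact: cvg_id].
Qed.

Lemma continuous_radial_inv t : 0 <= t <= 1 -> {for t, continuous radial_inv}.
Proof. by move=> t01; apply: continuousM; [exact: cvg_id | exact: continuous_radial_inv_scale]. Qed.

End RadialProfile.

Lemma cvg_mx_entries {R : realType} (T : Type) (F : set_system T) {FF : Filter F}
    m n (u : T -> 'M[R]_(m, n)) (l : 'M[R]_(m, n)) :
  (forall i j, (fun t => u t i j) @ F --> l i j) -> u @ F --> l.
Proof.
move=> cvg_ij; apply/cvg_mx_entourageP => A entA.
apply: filter_forall => i; apply: filter_forall => j.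
by move: (cvg_ij i j) => /cvg_app_entourageP/(_ A entA); apply: filterS => t ?; apply/mem_set.
Qed.

Lemma continuous_row_entries {R : realType} (T : topologicalType) k (u : T -> 'rV[R]_k) :
  (forall j, continuous (fun t => u t ord0 j)) -> continuous u.
Proof. by move=> cont_j p; apply: cvg_mx_entries => i j; rewrite (ord1 i); apply: cont_j. Qed.

Section EuclideanNorm.
Context {R : realType} {n : nat}.
Implicit Types (c : R) (x : 'rV[R]_n).

Lemma enormZ c x : enorm (c *: x) = `|c| * enorm x.
Proof.
rewrite /enorm; under eq_bigr do rewrite mxE exprMn.
by rewrite -mulr_sumr sqrtrM ?sqr_ge0 // sqrtr_sqr.
Qed.

Lemma enorm0 : enorm (0 : 'rV[R]_n) = 0.
Proof. by rewrite -(scale0r 0) enormZ normr0 mul0r. Qed.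

Lemma continuous_enorm : continuous (@enorm R n).
Proof.
move=> x; apply: (@continuous_comp _ _ _ (fun x : 'rV[R]_n => \sum_i x ord0 i ^+ 2) Num.sqrt).
  apply: continuous_big; first exact: add_continuous.
  by move=> i _ y; apply: continuousM; exact: coord_continuous.
exact: sqrt_continuous.
Qed.

End EuclideanNorm.

Section PlaneRotation.
Context {R : realType} {m : nat}.
Local Notation V := 'rV[R]_m.+2.
Implicit Types (a b c : R) (x : V).

Definition i0 : 'I_m.+2 := ord0.
Definition i1 : 'I_m.+2 := lift ord0 ord0.

Definition rot a x : V :=
  \row_j (if j == i0 then cos a * x ord0 i0 - sin a * x ord0 i1
          else if j == i1 then sin a * x ord0 i0 + cos a * x ord0 i1
          else x ord0 j).

Definition e0 : V := \row_j (if j == i0 then 1 else 0).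

Lemma i1_neq_i0 : (i1 == i0) = false. Proof. by []. Qed.
Lemma lift2_neq_i0 i : (lift ord0 (lift ord0 i) == i0) = false. Proof. by []. Qed.
Lemma lift2_neq_i1 i : (lift ord0 (lift ord0 i) == i1) = false. Proof. by []. Qed.

Lemma sum_plane_split (F : 'I_m.+2 -> R) :
  \sum_i F i = F i0 + F i1 + \sum_(i < m) F (lift ord0 (lift ord0 i)).
Proof. by rewrite big_ord_recl big_ord_recl addrA. Qed.

Lemma rot_i0 a x : rot a x ord0 i0 = cos a * x ord0 i0 - sin a * x ord0 i1.
Proof. by rewrite mxE eqxx. Qed.

Lemma rot_i1 a x : rot a x ord0 i1 = sin a * x ord0 i0 + cos a * x ord0 i1.
Proof. by rewrite mxE i1_neq_i0 eqxx. Qed.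

Lemma rot_lift2 a x i :
  rot a x ord0 (lift ord0 (lift ord0 i)) = x ord0 (lift ord0 (lift ord0 i)).
Proof. by rewrite mxE lift2_neq_i0 lift2_neq_i1. Qed.

Lemma rot_e0 a j : rot a e0 ord0 j =
  if j == i0 then cos a else if j == i1 then sin a else 0.
Proof.
rewrite !mxE eqxx i1_neq_i0; case: ifP => j0; first ring.
by case: ifP => j1; [ring | rewrite j0].
Qed.

Lemma rotZ a c x : rot a (c *: x) = c *: rot a x.
Proof. by apply/rowP => j; rewrite !mxE; case: ifP => _; [|case: ifP => _]; ring. Qed.

Lemma rotD a b x : rot a (rot b x) = rot (a + b) x.
Proof.
apply/rowP => j; rewrite !mxE eqxx i1_neq_i0 eqxx cosD sinD.
by case: ifP => j0; [|case: ifP => j1; [|rewrite j0 j1]]; ring.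
Qed.

Lemma rot0 x : rot 0 x = x.
Proof.
apply/rowP => j; rewrite !mxE cos0 sin0.
by case: ifP => [/eqP->|_]; [|case: ifP => [/eqP->|_]]; ring.
Qed.

Lemma enorm_rot a x : enorm (rot a x) = enorm x.
Proof.
rewrite /enorm !(sum_plane_split (fun i => _ ^+ 2)) rot_i0 rot_i1.
under eq_bigr do rewrite rot_lift2.
by congr (Num.sqrt (_ + _)); have := sin2cos2 a; nra.
Qed.

Lemma enorm_e0 : enorm e0 = 1.
Proof.
rewrite /enorm sum_plane_split big1 => [|i _]; last by rewrite mxE lift2_neq_i0 expr0n.
by rewrite !mxE eqxx i1_neq_i0 expr1n expr0n /= !addr0 sqrtr1.
Qed.

Lemma continuous_rot (a : V -> R) p : {for p, continuous a} ->
  {for p, continuous (fun x => rot (a x) x)}.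
Proof.
move=> cont_a; apply: (@cvg_mx_entries R V (nbhs p) (nbhs_filter p)) => i j.
rewrite (_ : (fun x => _) = fun x : V =>
  if j == i0 then cos (a x) * x ord0 i0 - sin (a x) * x ord0 i1
  else if j == i1 then sin (a x) * x ord0 i0 + cos (a x) * x ord0 i1
  else x ord0 j); last by apply: funext => x; rewrite mxE.
have cont_cos : {for p, continuous (cos \o a)}.
  exact: continuous_comp cont_a (@continuous_cos R _).
have cont_sin : {for p, continuous (sin \o a)}.
  exact: continuous_comp cont_a (@continuous_sin R _).
rewrite mxE; case: ifP => _; [|case: ifP => _]; last exact: coord_continuous.
  by apply: cvgB; apply: cvgM => //; exact: coord_continuous.
by apply: cvgD; apply: cvgM => //; exact: coord_continuous.
Qed.

End PlaneRotation.

Section TwistMap.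
Context {R : realType} {m : nat}.
Local Notation V := 'rV[R]_m.+2.
Implicit Types x y : V.

Definition twist_map x : V := radial_scale (enorm x) *: rot (twist (enorm x)) x.

Definition twist_map_inv y : V :=
  radial_inv_scale (enorm y) *: rot (- twist (radial_inv (enorm y))) y.

Lemma enorm_in01 x : ball_n R m.+2 x -> 0 <= enorm x <= 1.
Proof. by move=> x1; rewrite sqrtr_ge0. Qed.

Lemma enorm_twist_map x : ball_n R m.+2 x -> enorm (twist_map x) = radial (enorm x).
Proof.
move=> /enorm_in01 x01; rewrite enormZ enorm_rot ger0_norm; first exact: mulrC.
exact/ltW/radial_scale_gt0.
Qed.

Lemma enorm_twist_map_inv y : ball_n R m.+2 y ->
  enorm (twist_map_inv y) = radial_inv (enorm y).
Proof.
move=> /enorm_in01 y01; rewrite enormZ enorm_rot ger0_norm; first exact: mulrC.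
exact/ltW/radial_inv_scale_gt0.
Qed.

Lemma twist_mapK x : ball_n R m.+2 x -> twist_map_inv (twist_map x) = x.
Proof.
move=> x1; have x01 := enorm_in01 _ x1.
rewrite /twist_map_inv enorm_twist_map // radialK ?in_itv //.
by rewrite rotZ scalerA rotD addNr rot0 radial_inv_scaleK // scale1r.
Qed.

Lemma twist_map_invK y : ball_n R m.+2 y -> twist_map (twist_map_inv y) = y.
Proof.
move=> y1; have y01 := enorm_in01 _ y1; have r01 := radial_inv_in01 _ y01.
rewrite /twist_map enorm_twist_map_inv // rotZ scalerA rotD addrN rot0.
have := radial_inv_scaleK _ r01; rewrite radial_invK ?in_itv // mulrC => ->.
by rewrite scale1r.
Qed.

Lemma continuous_twist_map x : ball_n R m.+2 x -> {for x, continuous twist_map}.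
Proof.
move=> /enorm_in01 x01; apply: continuousZ.
  exact: continuous_comp (continuous_enorm x) (continuous_radial_scale _ x01).
apply: continuous_rot.
exact: continuous_comp (continuous_enorm x) (continuous_twist _ x01).
Qed.

Lemma continuous_twist_map_inv y : ball_n R m.+2 y -> {for y, continuous twist_map_inv}.
Proof.
move=> /enorm_in01 y01; apply: continuousZ.
  exact: continuous_comp (continuous_enorm y) (continuous_radial_inv_scale _ y01).
apply/continuous_rot/continuousN.
exact: continuous_comp (continuous_enorm y)
  (continuous_comp (continuous_radial_inv _ y01) (continuous_twist _ (radial_inv_in01 _ y01))).
Qed.

Lemma homeo_twist_map :
  homeo_via (ball_n R m.+2) (ball_n R m.+2) twist_map twist_map_inv.
Proof.
split=> [x x1|].
  by rewrite /ball_n /= enorm_twist_map //; case/andP: (radial_in01 _ (enorm_in01 _ x1)).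
split=> [y y1|].
  by rewrite /ball_n /= enorm_twist_map_inv //; case/andP: (radial_inv_in01 _ (enorm_in01 _ y1)).
split; first exact: twist_mapK.
split; first exact: twist_map_invK.
split; apply: continuous_in_subspaceT => x; rewrite inE.
  exact: continuous_twist_map.
exact: continuous_twist_map_inv.
Qed.

Lemma twist_map_fixes_sphere x : sphere_n R m.+2 x -> twist_map x = x.
Proof. by rewrite /twist_map => ->; rewrite radial_scale1 twist1 rot0 scale1r. Qed.

Lemma twist_map0 : twist_map 0 = 0.
Proof. by rewrite /twist_map -(scale0r 0) rotZ !scale0r scaler0. Qed.

End TwistMap.

Section RadialOrbit.
Context {R : realType}.

Definition orbit_radius k : R := iter k radial 2^-1.
Definition orbit_angle k : R := \sum_(j < k) twist (orbit_radius j).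

Lemma orbit_radiusS k : orbit_radius k.+1 = radial (orbit_radius k).
Proof. by []. Qed.

Lemma orbit_angleS k : orbit_angle k.+1 = orbit_angle k + twist (orbit_radius k).
Proof. by rewrite /orbit_angle big_ord_recr. Qed.

Lemma orbit_radius_bounds k : 2^-1 <= orbit_radius k < 1.
Proof.
elim: k => [|k /andP[r_ge r_lt1]]; first by rewrite /orbit_radius /=; apply/andP; split; lra.
have r01 : 0 <= orbit_radius k <= 1 by apply/andP; split; lra.
have D1 := radial_denom_ge1 _ r01.
have := one_sub_radial _ r01; rewrite orbit_radiusS => defect.
have : (1 - radial (orbit_radius k)) * (1 + orbit_radius k * (1 - orbit_radius k))
       = 1 - orbit_radius k by rewrite defect mulfVK //; lra.
by move=> E; apply/andP; split; nra.
Qed.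

Lemma orbit_radius_in01 k : 0 <= orbit_radius k <= 1.
Proof. by have /andP[? ?] := orbit_radius_bounds k; apply/andP; split; lra. Qed.

(* The defect [u = 1 - r] obeys [1/u' = 1/u + r >= 1/u + 1/2]. *)
Lemma orbit_defect_bound k : (k%:R / 2 + 2) * (1 - orbit_radius k) <= 1.
Proof.
elim: k => [|k IH]; first by rewrite /orbit_radius /=; lra.
have r01 := orbit_radius_in01 k; have /andP[r_ge r_lt1] := orbit_radius_bounds k.
have D1 := radial_denom_ge1 _ r01.
rewrite orbit_radiusS one_sub_radial // -addn1 natrD mulrA ler_pdivrMr; nra.
Qed.

(* The twists telescope, since [1 + r u = u / u']. *)
Lemma expR_orbit_angle k : expR (orbit_angle k) * (2 * (1 - orbit_radius k)) = 1.
Proof.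
elim: k => [|k IH]; first by rewrite /orbit_angle big_ord0 expR0 mul1r /orbit_radius /=; field.
have r01 := orbit_radius_in01 k; have D1 := radial_denom_ge1 _ r01.
rewrite orbit_angleS expRD orbit_radiusS one_sub_radial // /twist lnK ?posrE; last lra.
by rewrite -[RHS]IH; field; lra.
Qed.

Lemma orbit_radius_cvg : orbit_radius @ \oo --> (1 : R).
Proof.
apply/cvgrPdist_lt => e e0; near=> k.
have k_big : 2 < k%:R * e by rewrite -ltr_pdivrMr //; near: k; exact: nbhs_infty_gtr.
have := orbit_defect_bound k; have /andP[r_ge r_lt1] := orbit_radius_bounds k.
by rewrite ger0_norm; nra.
Unshelve. all: end_near. Qed.

Lemma orbit_angle_cvgy : orbit_angle @ \oo --> +oo.
Proof.
apply/cvgryPge => A; near=> k.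
have k_big : 4 * expR A < k%:R by near: k; exact: nbhs_infty_gtr.
have E := expR_orbit_angle k; have u_le := orbit_defect_bound k.
have /andP[r_ge r_lt1] := orbit_radius_bounds k; have := expR_gt0 (orbit_angle k).
have angle_big : k%:R / 2 + 2 <= 2 * expR (orbit_angle k) by nra.
by rewrite -ler_expR; lra.
Unshelve. all: end_near. Qed.

Lemma orbit_angle_step_cvg0 : (fun k => orbit_angle k.+1 - orbit_angle k) @ \oo --> 0.
Proof.
apply: (@squeeze_cvgr _ _ _ _ (fun=> 0) (fun k => 1 - orbit_radius k)).
- near=> k; rewrite orbit_angleS addrAC subrr add0r.
  by rewrite twist_ge0 ?twist_le_defect ?orbit_radius_in01.
- exact: cvg_cst.
- by rewrite -(subrr (1 : R)); apply: cvgB; [exact: cvg_cst | exact: orbit_radius_cvg].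
Unshelve. all: end_near. Qed.

End RadialOrbit.

Lemma iter_twist_map {R : realType} {m : nat} k :
  iter k (@twist_map R m) (2^-1 *: e0) = orbit_radius k *: rot (orbit_angle k) e0.
Proof.
elim: k => [|k IH]; first by rewrite /= /orbit_angle big_ord0 rot0.
have /andP[r_ge r_lt1] := @orbit_radius_bounds R k.
rewrite iterS IH /twist_map enormZ enorm_rot enorm_e0 mulr1 ger0_norm; last lra.
by rewrite rotZ rotD scalerA orbit_radiusS orbit_angleS /radial mulrC addrC.
Qed.

Definition unbounded_index (n_ : nat -> nat) : Prop :=
  forall N : nat, exists M : nat, forall i : nat, (M <= i)%N -> (N <= n_ i)%N.

Definition subseq_limits {T : topologicalType} (u : nat -> T) : set T :=
  [set y | exists n_, unbounded_index n_ /\ (fun i => u (n_ i)) @ \oo --> y].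

Lemma omega_limitE {R : realType} {n : nat} (f : 'rV[R]_n -> 'rV[R]_n) x :
  omega_limit f x = subseq_limits (fun k => iter k f x).
Proof. by []. Qed.

Lemma cvg_subseq {T : topologicalType} {u : nat -> T} {n_ : nat -> nat} {l : T} :
  unbounded_index n_ -> u @ \oo --> l -> (fun i => u (n_ i)) @ \oo --> l.
Proof.
move=> n_unb u_l; apply: cvg_comp u_l => P [N _ NP].
by have [M MN] := n_unb N; exists M => // i /MN /NP.
Qed.

(* The angles cannot jump over the target [b + 2 pi z] once their steps are shorter than [e]. *)
Lemma dense_angles_mod2pi {R : realType} {t : nat -> R} :
  t @ \oo --> +oo -> (fun k => t k.+1 - t k) @ \oo --> 0 ->
  forall (b e : R) (N : nat), 0 < e ->
  exists k z : nat, (N <= k)%N /\ `|t k - (b + pi *+ 2 *+ z)| < e.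
Proof.
move=> t_oo dt_0 b e N e0.
have [K _ step_small] : \forall k \near \oo, t k.+1 - t k < e.
  move/cvgrPdist_lt: dt_0 => /(_ e e0); apply: filterS => k.
  by rewrite sub0r normrN; apply: le_lt_trans; exact: ler_norm.
pose K' := maxn N K.
have pi2_gt0 : 0 < pi *+ 2 :> R by rewrite mulrn_wgt0 // pi_gt0.
have [z _ z_big] := nbhs_infty_gtr ((t K' - b) / (pi *+ 2)).
pose T := b + pi *+ 2 *+ z.
have tK'_lt : t K' < T.
  by have := z_big z (leqnn z); rewrite ltr_pdivrMr // /T -[pi *+ 2 *+ z]mulr_natr mulrC; lra.
have [N2 _ t_big] : \forall k \near \oo, T <= t k by exact: (proj1 (cvgryPge _)) t_oo T.
have ex_past : exists k, (K' <= k)%N && (T <= t k).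
  by exists (maxn K' N2); rewrite leq_maxl; apply: t_big; rewrite /= leq_maxr.
case: (ex_minnP ex_past) => k /andP[K'k Tk] k_min.
have K'_lt_k : (K' < k)%N.
  by rewrite ltn_neqAle K'k andbT; apply/eqP => K'E; move: tK'_lt; rewrite K'E ltNge Tk.
case: k K'k Tk k_min K'_lt_k => [//|j] _ Tj1 j_min; rewrite ltnS => K'_le_j.
have tj_lt : t j < T.
  by rewrite ltNge; apply/negP => Tj; have := j_min j; rewrite K'_le_j Tj ltnn => /(_ isT).
have := step_small j (leq_trans (leq_maxr N K) K'_le_j).
exists j.+1, z; split; first exact: leq_trans (leq_maxl N K) (leqW K'_le_j).
by rewrite -/T ger0_norm; lra.
Qed.

Section PlaneCircle.
Context {R : realType} {m : nat}.
Local Notation V := 'rV[R]_m.+2.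

Definition plane_circle : set V := [set y | y ord0 i0 ^+ 2 + y ord0 i1 ^+ 2 = 1 /\
  forall j, j != i0 -> j != i1 -> y ord0 j = 0].

Lemma plane_circle_sub_sphere : plane_circle `<=` sphere_n R m.+2.
Proof.
move=> y [y01 y_other]; rewrite /sphere_n /= /enorm sum_plane_split big1 ?addr0 ?y01 ?sqrtr1 //.
by move=> i _; rewrite y_other ?lift2_neq_i0 ?lift2_neq_i1 // expr0n.
Qed.

Lemma plane_circleP y : plane_circle y -> exists a, y = rot a e0.
Proof.
case=> y01 y_other; set c := y ord0 i0 in y01 *; set s := y ord0 i1 in y01 *.
have c_itv : -1 <= c <= 1 by apply/andP; split; nra.
have cos_acos : cos (acos c) = c by apply: acosK; rewrite in_itv.
have sin_acos_norm : sin (acos c) = `|s| by rewrite sin_acos // -y01 addrAC subrr add0r sqrtr_sqr.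
have [a [cos_a sin_a]] : exists a, cos a = c /\ sin a = s.
  case: (lerP 0 s) => s0; first by exists (acos c); rewrite cos_acos sin_acos_norm ger0_norm.
  by exists (- acos c); rewrite cosN sinN cos_acos sin_acos_norm ltr0_norm // opprK.
exists a; apply/rowP => j; rewrite rot_e0; case: ifP => [/eqP->|j0] //.
by case: ifP => [/eqP->|j1] //; apply: y_other; rewrite ?j0 ?j1.
Qed.

Lemma rot_e0_2pi (a : R) z : rot (a + pi *+ 2 *+ z) e0 = rot a e0 :> V.
Proof. by apply/rowP => j; rewrite !rot_e0 (periodicn (@cosD2pi R)) (periodicn (@sinD2pi R)). Qed.

Lemma continuous_rot_e0 : continuous (fun a : R => rot a e0 : V).
Proof.
apply: continuous_row_entries => j /=.
have -> : (fun a : R => rot a e0 ord0 j) =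
    fun a => if j == i0 then cos a else if j == i1 then sin a else 0.
  by apply: funext => a; rewrite rot_e0.
move=> a; case: (j == i0); first exact: continuous_cos.
by case: (j == i1); [exact: continuous_sin | exact: cvg_cst].
Qed.

Definition plane_proj (y : V) : 'rV[R]_2 := \row_(j < 2) y ord0 (if j == ord0 then i0 else i1).

Definition plane_embed (z : 'rV[R]_2) : V :=
  \row_j (if j == i0 then z ord0 ord0 else if j == i1 then z ord0 (lift ord0 ord0) else 0).

Lemma homeomorphic_plane_circle : homeomorphic plane_circle (sphere_n R 2).
Proof.
have enorm2 (z : 'rV[R]_2) : enorm z = Num.sqrt (z ord0 ord0 ^+ 2 + z ord0 (lift ord0 ord0) ^+ 2).
  by rewrite /enorm !big_ord_recl big_ord0 addr0.
exists plane_proj, plane_embed; split.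
  by case=> y [y01 _]; rewrite /sphere_n /= enorm2 !mxE /= y01 sqrtr1.
split.
  move=> z; rewrite /sphere_n /= enorm2 => z1.
  have z01 : z ord0 ord0 ^+ 2 + z ord0 (lift ord0 ord0) ^+ 2 = 1.
    by rewrite -[LHS]sqr_sqrtr ?z1 ?expr1n // addr_ge0 ?sqr_ge0.
  split; first by rewrite !mxE eqxx i1_neq_i0 eqxx.
  by move=> j j0 j1; rewrite mxE (negbTE j0) (negbTE j1).
split.
  case=> y [_ y_other]; apply/rowP => j; rewrite !mxE /=.
  case: ifP => [/eqP->|j0] //; case: ifP => [/eqP->|j1] //.
  by rewrite y_other ?j0 ?j1.
split.
  move=> z _; apply/rowP => j; rewrite !mxE.
  have [->|j0] := eqVneq j ord0; first by rewrite !eqxx.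
  rewrite i1_neq_i0 eqxx; congr (z ord0 _); apply/val_inj.
  by case: j j0 => [[|[|k]] ?].
split; apply: continuous_subspaceT; apply: continuous_row_entries => j.
  by rewrite (_ : (fun y => _) = fun y : V => y ord0 (if j == ord0 then i0 else i1));
    [exact: coord_continuous | apply: funext => y; rewrite mxE].
rewrite (_ : (fun z => _) = fun z : 'rV[R]_2 => if j == i0 then z ord0 ord0
  else if j == i1 then z ord0 (lift ord0 ord0) else 0); last first.
  by apply: funext => z; rewrite mxE.
case: (j == i0); first exact: coord_continuous.
by case: (j == i1); [exact: coord_continuous | exact: cst_continuous].
Qed.

Lemma subseq_limits_spiral_sub (r t : nat -> R) : r @ \oo --> (1 : R) ->
  subseq_limits (fun k => r k *: rot (t k) e0 : V) `<=` plane_circle.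
Proof.
move=> r_1 y [n_ [n_unb u_y]].
pose c i := cos (t (n_ i)); pose s i := sin (t (n_ i)).
have coord j : (fun i => r (n_ i) * (if j == i0 then c i else if j == i1 then s i else 0))
    @ \oo --> y ord0 j.
  rewrite (_ : (fun i => _) = (fun M : V => M ord0 j) \o (fun i => r (n_ i) *: rot (t (n_ i)) e0)).
    exact: cvg_comp u_y (@coord_continuous R 1 m.+2 ord0 j y).
  by apply: funext => i /=; rewrite mxE rot_e0.
split.
  have c0 := coord i0; have c1 := coord i1; rewrite eqxx in c0; rewrite i1_neq_i0 eqxx in c1.
  have r'_1 := cvg_subseq n_unb r_1.
  have sq_r : (fun i => r (n_ i) * c i) \* (fun i => r (n_ i) * c i) +
      (fun i => r (n_ i) * s i) \* (fun i => r (n_ i) * s i) =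
      (fun i => r (n_ i)) \* (fun i => r (n_ i)).
    by apply: funext => i; rewrite !fctE /= -[RHS]mulr1 -(cos2Dsin2 (t (n_ i))) /c /s; ring.
  have sq_y : (fun i => r (n_ i)) \* (fun i => r (n_ i)) @ \oo -->
      y ord0 i0 * y ord0 i0 + y ord0 i1 * y ord0 i1.
    by rewrite -sq_r; exact: cvgD (cvgM c0 c0) (cvgM c1 c1).
  have sq_1 : (fun i => r (n_ i)) \* (fun i => r (n_ i)) @ \oo --> (1 : R).
    by rewrite -[1](mulr1 (1 : R)); exact: (cvgM r'_1 r'_1).
  by rewrite !expr2; exact: cvg_unique _ sq_y sq_1.
move=> j j0 j1; have := coord j; rewrite (negbTE j0) (negbTE j1).
under eq_fun do rewrite mulr0.
by move=> y_j; exact: cvg_unique _ y_j (cvg_cst (0 : R) (FF := eventually_filter)).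
Qed.

(* Along a subsequence where [t] approaches [b] modulo [2 pi], the spiral approaches [rot b e0]. *)
Lemma plane_circle_sub_subseq_limits (r t : nat -> R) :
  r @ \oo --> (1 : R) -> t @ \oo --> +oo -> (fun k => t k.+1 - t k) @ \oo --> 0 ->
  plane_circle `<=` subseq_limits (fun k => r k *: rot (t k) e0 : V).
Proof.
move=> r_1 t_oo dt_0 y /plane_circleP[b ->].
have near_b_at i : exists kz : nat * nat, (i <= kz.1)%N /\
    `|t kz.1 - (b + pi *+ 2 *+ kz.2)| < harmonic i.
  have [k [z [ik close]]] := dense_angles_mod2pi t_oo dt_0 b (harmonic i) i (harmonic_gt0 i).
  by exists (k, z).
have [kz near_b] := choice near_b_at.
have n_unb : unbounded_index (fun i => (kz i).1).
  by move=> N; exists N => i Ni; apply: leq_trans Ni (near_b i).1.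
exists (fun i => (kz i).1); split => //.
pose d i := t (kz i).1 - pi *+ 2 *+ (kz i).2.
have d_b : d @ \oo --> b.
  apply/cvgrPdist_lt => e e0; move/cvgrPdist_lt: (@cvg_harmonic R) => /(_ e e0).
  apply: filterS => i; rewrite sub0r normrN ger0_norm ?harmonic_ge0 //; apply: lt_trans.
  have -> : b - d i = - (t (kz i).1 - (b + pi *+ 2 *+ (kz i).2)) by rewrite /d; ring.
  by rewrite normrN; exact: (near_b i).2.
rewrite -[rot b e0]scale1r; apply: cvgZ; first exact: (cvg_subseq n_unb r_1).
rewrite (_ : (fun i => _) = (fun a => rot a e0) \o d).
  exact: cvg_comp d_b (continuous_rot_e0 b).
by apply: funext => i; rewrite /= /d -[in LHS](subrK (pi *+ 2 *+ (kz i).2) (t _)) rot_e0_2pi.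
Qed.

End PlaneCircle.

Lemma subseq_limits_spiral {R : realType} {m : nat} (r t : nat -> R) :
  r @ \oo --> (1 : R) -> t @ \oo --> +oo -> (fun k => t k.+1 - t k) @ \oo --> 0 ->
  subseq_limits (fun k => r k *: rot (t k) e0 : 'rV[R]_m.+2) = plane_circle.
Proof.
move=> r_1 t_oo dt_0; apply/seteqP; split.
  exact: subseq_limits_spiral_sub.
exact: plane_circle_sub_subseq_limits.
Qed.

Lemma omega_limit_twist_map {R : realType} {m : nat} :
  omega_limit (@twist_map R m) (2^-1 *: e0) = plane_circle.
Proof.
rewrite omega_limitE (funext iter_twist_map).
exact: subseq_limits_spiral orbit_radius_cvg orbit_angle_cvgy orbit_angle_step_cvg0.
Qed.

Theorem proposition4p1 (R : realType) (n : nat) (hn : (2 <= n)%N) :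
  exists (f g : 'rV[R]_n -> 'rV[R]_n),
    homeo_via (ball_n R n) (ball_n R n) f g /\
    (sphere_n R n `|` [set 0]) `<=` Fix (ball_n R n) f /\
    exists x : 'rV[R]_n,
      ball_n R n x /\ ~ (sphere_n R n `|` [set 0]) x /\
      omega_limit f x `<=` sphere_n R n /\
      homeomorphic (omega_limit f x) (sphere_n R 2).
Proof.
case: n hn => [|[|m]] // _.
have enorm_x0 : enorm (2^-1 *: e0 : 'rV[R]_m.+2) = 2^-1.
  by rewrite enormZ enorm_e0 mulr1 ger0_norm.
exists twist_map, twist_map_inv; split; first exact: homeo_twist_map.
split.
  move=> x [x_1|->]; last by rewrite /Fix /ball_n /= twist_map0 enorm0 ler01.
  have x_1' : enorm x = 1 by [].
  by split; [rewrite /ball_n /= x_1' | exact: twist_map_fixes_sphere].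
exists (2^-1 *: e0); split; first by rewrite /ball_n /= enorm_x0; lra.
split.
  case=> [x0_1|x0_0]; have := enorm_x0; last by rewrite x0_0 enorm0; lra.
  by have -> : enorm (2^-1 *: e0 : 'rV[R]_m.+2) = 1 by []; lra.
rewrite omega_limit_twist_map.
by split; [exact: plane_circle_sub_sphere | exact: homeomorphic_plane_circle].
Qed.
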